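(* Let $\mathcal{K}$ be a cocomplete category and $i:\mathcal{A}\hookrightarrow\mathcal{K}$ a small full dense subcategory. Let $\mathsf{L}=\mathrm{Lan}_y i:\mathbf{Set}^{\mathcal{A}^{op}}\to\mathcal{K}$ (the geometric realization) and $\mathsf{R}=\mathrm{Lan}_i y=\mathcal{K}(i-,-):\mathcal{K}\to\mathbf{Set}^{\mathcal{A}^{op}}$ (the nerve), so that $\mathsf{L}\dashv\mathsf{R}$. Let $\mathcal{O}:\mathbf{Set}^{\mathcal{A}^{op}}\to(\mathbf{Set}^{\mathcal{A}})^{op}$, $\mathcal{O}(X)(a)=\mathbf{Set}^{\mathcal{A}^{op}}(X,y(a))$, and $\mathsf{Spec}:(\mathbf{Set}^{\mathcal{A}})^{op}\to \mathbf{Set}^{\mathcal{A}^{op}}$, $\mathsf{Spec}(Y)(a)=\mathbf{Set}^{\mathcal{A}}(Y,\mathcal{A}(a,-))$, be the Isbell functors. Then there is an adjunction \[\mathcal{O}\circ\mathsf{R}\dashv \mathsf{L}\circ\mathsf{Spec},\] with $\mathcal{O}\circ\mathsf{R}:\mathcal{K}\to(\mathbf{Set}^{\mathcal{A}})^{op}$ and $\mathsf{L}\circ\mathsf{Spec}:(\mathbf{Set}^{\mathcal{A}})^{op}\to\mathcal{K}$.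
   Context: $y:\mathcal{A}\to\mathbf{Set}^{\mathcal{A}^{op}}$ denotes the Yoneda embedding. A full subcategory $i:\mathcal{A}\hookrightarrow\mathcal{K}$ is dense if every object of $\mathcal{K}$ is canonically the colimit of the diagram $\mathcal{A}/k\to\mathcal{K}$, equivalently $\mathrm{Lan}_i i\cong \mathrm{id}_{\mathcal{K}}$ pointwise. *)

(* Morphism equality is Leibniz equality; equality of
   natural transformations / comma morphisms uses funext + proof irrelevance. *)
From Stdlib Require Import FunctionalExtensionality ProofIrrelevance.

Set Universe Polymorphism.
Set Polymorphic Inductive Cumulativity.
Set Implicit Arguments.
Unset Strict Implicit.

Record Category := {
  Obj :> Type;
  Hom : Obj -> Obj -> Type;
  idm : forall a, Hom a a;
  comp : forall {a b c}, Hom b c -> Hom a b -> Hom a c;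
  comp_idl : forall a b (f : Hom a b), comp (idm b) f = f;
  comp_idr : forall a b (f : Hom a b), comp f (idm a) = f;
  comp_assoc : forall a b c d (f : Hom a b) (g : Hom b c) (h : Hom c d),
      comp h (comp g f) = comp (comp h g) f }.
Arguments Hom {C} a b : rename.
Arguments idm {C} a : rename.
Arguments comp {C a b c} g f : rename.

Definition op (C : Category) : Category := {|
  Obj := Obj C;
  Hom := fun a b => @Hom C b a;
  idm := fun a => idm a;
  comp := fun a b c g f => comp f g;
  comp_idl := fun a b f => comp_idr f;
  comp_idr := fun a b f => comp_idl f;
  comp_assoc := fun a b c d f g h => eq_sym (comp_assoc h g f) |}.

Record Functor (C D : Category) := {
  fobj :> Obj C -> Obj D;
  fmap : forall {a b : Obj C}, Hom a b -> Hom (fobj a) (fobj b);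
  fmap_id : forall a, fmap (idm a) = idm (fobj a);
  fmap_comp : forall a b c (g : Hom b c) (f : Hom a b),
      fmap (comp g f) = comp (fmap g) (fmap f) }.
Arguments fmap {C D} F {a b} f : rename.

Record NatTrans (C D : Category) (F G : Functor C D) := {
  component :> forall a : Obj C, Hom (F a) (G a);
  naturality : forall a b (f : Hom a b),
      comp (component b) (fmap F f) = comp (fmap G f) (component a) }.

Lemma nat_eq (C D : Category) (F G : Functor C D) (s t : NatTrans F G) :
  (forall a, s a = t a) -> s = t.
Proof.
  destruct s as [s ns], t as [t nt]; simpl; intros H.
  assert (s = t) by (apply functional_extensionality_dep; exact H).
  subst t. f_equal. apply proof_irrelevance.
Qed.

Definition IdF (C : Category) : Functor C C.
Proof.
  refine {| fobj := fun a => a; fmap := fun a b f => f |}; reflexivity.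
Defined.

Definition FComp (C D E : Category) (G : Functor D E) (F : Functor C D) :
  Functor C E.
Proof.
  refine {| fobj := fun a => G (F a); fmap := fun a b f => fmap G (fmap F f) |}.
  - intros a. rewrite !fmap_id. reflexivity.
  - intros a b c g f. rewrite !fmap_comp. reflexivity.
Defined.

Definition NatId (C D : Category) (F : Functor C D) : NatTrans F F.
Proof.
  refine {| component := fun a => idm (F a) |}.
  intros a b f. rewrite comp_idl, comp_idr. reflexivity.
Defined.

Definition NatComp (C D : Category) (F G H : Functor C D)
  (t : NatTrans G H) (s : NatTrans F G) : NatTrans F H.
Proof.
  refine {| component := fun a => comp (t a) (s a) |}.
  intros a b f. rewrite <- comp_assoc, naturality, !comp_assoc, naturality.
  reflexivity.
Defined.

Definition FunCat (C D : Category) : Category.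
Proof.
  refine {| Obj := Functor C D; Hom := @NatTrans C D;
            idm := @NatId C D; comp := fun F G H t s => NatComp t s |}.
  - intros F G s; apply nat_eq; intros x; simpl; apply comp_idl.
  - intros F G s; apply nat_eq; intros x; simpl; apply comp_idr.
  - intros F G H K s t u; apply nat_eq; intros x; simpl; apply comp_assoc.
Defined.

Definition SetCat : Category.
Proof.
  refine {| Obj := Type; Hom := fun X Y => X -> Y;
            idm := fun X x => x; comp := fun X Y Z g f x => g (f x) |};
  reflexivity.
Defined.

Definition PSh (A : Category) : Category := FunCat (op A) SetCat.
Definition CoPSh (A : Category) : Category := FunCat A SetCat.

Definition homFrom_obj (B C : Category) (F : Functor B C) (c : Obj C) :
  Functor (op B) SetCat.
Proof.
  refine (@Build_Functor (op B) SetCat (fun b => @Hom C (F b) c)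
            (fun b b' (f : @Hom B b' b) (h : @Hom C (F b) c) =>
               comp h (fmap F f)) _ _).
  - intros b; apply functional_extensionality; intros h; simpl.
    rewrite fmap_id; apply comp_idr.
  - intros a b0 c0 g f; apply functional_extensionality; intros h; simpl.
    rewrite fmap_comp; apply comp_assoc.
Defined.

Definition homFrom_map (B C : Category) (F : Functor B C) (c c' : Obj C)
  (u : Hom c c') : NatTrans (homFrom_obj F c) (homFrom_obj F c').
Proof.
  refine (@Build_NatTrans (op B) SetCat (homFrom_obj F c) (homFrom_obj F c')
            (fun b (h : @Hom C (F b) c) => comp u h) _).
  intros b b' f; apply functional_extensionality; intros h; simpl.
  apply comp_assoc.
Defined.

Definition homFrom (B C : Category) (F : Functor B C) :
  Functor C (FunCat (op B) SetCat).
Proof.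
  refine (@Build_Functor C (FunCat (op B) SetCat) (homFrom_obj F)
            (homFrom_map F) _ _).
  - intros c; apply nat_eq; intros b; apply functional_extensionality;
    intros h; simpl; apply comp_idl.
  - intros a b0 c0 g f; apply nat_eq; intros b;
    apply functional_extensionality; intros h; simpl.
    symmetry; apply comp_assoc.
Defined.

Definition yo (A : Category) : Functor A (PSh A) := homFrom (IdF A).

Definition coyo_obj (A : Category) (a : Obj A) : Functor A SetCat.
Proof.
  refine (@Build_Functor A SetCat (fun b => @Hom A a b)
            (fun b b' (g : Hom b b') (h : Hom a b) => comp g h) _ _).
  - intros b; apply functional_extensionality; intros h; simpl; apply comp_idl.
  - intros b0 b1 b2 g f; apply functional_extensionality; intros h; simpl.
    symmetry; apply comp_assoc.
Defined.

Definition coyo_map (A : Category) (a a' : Obj A) (f : @Hom A a' a) :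
  NatTrans (coyo_obj a) (coyo_obj a').
Proof.
  refine (@Build_NatTrans A SetCat (coyo_obj a) (coyo_obj a') (fun b (h : Hom a b) => comp h f) _).
  intros b b' g; apply functional_extensionality; intros h; simpl.
  symmetry; apply comp_assoc.
Defined.

Definition coyo (A : Category) : Functor (op A) (CoPSh A).
Proof.
  refine (@Build_Functor (op A) (CoPSh A) (@coyo_obj A) (@coyo_map A) _ _).
  - intros a; apply nat_eq; intros b; apply functional_extensionality;
    intros h; simpl; apply comp_idr.
  - intros a0 a1 a2 g f; apply nat_eq; intros b;
    apply functional_extensionality; intros h; simpl; apply comp_assoc.
Defined.

Definition IsbellO_obj (A : Category) (X : Obj (PSh A)) : Functor A SetCat.
Proof.
  refine (@Build_Functor A SetCat (fun a => @Hom (PSh A) X (yo A a))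
            (fun a a' (u : Hom a a') (s : @Hom (PSh A) X (yo A a)) =>
               comp (fmap (yo A) u) s) _ _).
  - intros a; apply functional_extensionality; intros s; cbv beta.
    rewrite (fmap_id (yo A)); apply (@comp_idl (PSh A)).
  - intros a0 a1 a2 g f; apply functional_extensionality; intros s; cbv beta.
    rewrite (fmap_comp (yo A)). symmetry; apply (@comp_assoc (PSh A)).
Defined.

Definition IsbellO_map (A : Category) (X X' : Obj (PSh A))
  (p : @Hom (PSh A) X X') : NatTrans (IsbellO_obj X') (IsbellO_obj X).
Proof.
  refine (@Build_NatTrans A SetCat (IsbellO_obj X') (IsbellO_obj X)
            (fun a (s : @Hom (PSh A) X' (yo A a)) => comp s p) _).
  intros a a' u; apply functional_extensionality; intros s; cbv beta.
  symmetry; apply (@comp_assoc (PSh A)).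
Defined.

Definition IsbellO (A : Category) : Functor (PSh A) (op (CoPSh A)).
Proof.
  refine (@Build_Functor (PSh A) (op (CoPSh A)) (@IsbellO_obj A)
            (@IsbellO_map A) _ _).
  - intros X; apply nat_eq; intros a; apply functional_extensionality;
    intros s; simpl; apply (@comp_idr (PSh A)).
  - intros X0 X1 X2 g f; apply nat_eq; intros a;
    apply functional_extensionality; intros s; cbv beta.
    apply (@comp_assoc (PSh A)).
Defined.

Definition IsbellSpec_obj (A : Category) (Y : Obj (CoPSh A)) :
  Functor (op A) SetCat.
Proof.
  refine (@Build_Functor (op A) SetCat (fun a => @Hom (CoPSh A) Y (coyo A a))
            (fun a a' (u : @Hom (op A) a a') (s : @Hom (CoPSh A) Y (coyo A a)) =>
               comp (fmap (coyo A) u) s) _ _).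
  - intros a; apply functional_extensionality; intros s; cbv beta.
    rewrite (fmap_id (coyo A)); apply (@comp_idl (CoPSh A)).
  - intros a0 a1 a2 g f; apply functional_extensionality; intros s; cbv beta.
    rewrite (fmap_comp (coyo A)). symmetry; apply (@comp_assoc (CoPSh A)).
Defined.

Definition IsbellSpec_map (A : Category) (Y Y' : Obj (CoPSh A))
  (p : @Hom (CoPSh A) Y' Y) : NatTrans (IsbellSpec_obj Y) (IsbellSpec_obj Y').
Proof.
  refine (@Build_NatTrans (op A) SetCat (IsbellSpec_obj Y) (IsbellSpec_obj Y')
            (fun a (s : @Hom (CoPSh A) Y (coyo A a)) => comp s p) _).
  intros a a' u; apply functional_extensionality; intros s; cbv beta.
  symmetry; apply (@comp_assoc (CoPSh A)).
Defined.

Definition IsbellSpec (A : Category) : Functor (op (CoPSh A)) (PSh A).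
Proof.
  refine (@Build_Functor (op (CoPSh A)) (PSh A) (@IsbellSpec_obj A)
            (@IsbellSpec_map A) _ _).
  - intros Y; apply nat_eq; intros a; apply functional_extensionality;
    intros s; simpl; apply (@comp_idr (CoPSh A)).
  - intros Y0 Y1 Y2 g f; apply nat_eq; intros a;
    apply functional_extensionality; intros s; cbv beta.
    apply (@comp_assoc (CoPSh A)).
Defined.

Record Adjunction (C D : Category) (F : Functor C D) (G : Functor D C) := {
  adj_unit : NatTrans (IdF C) (FComp G F);
  adj_counit : NatTrans (FComp F G) (IdF D);
  adj_tri_l : forall c : Obj C,
      comp (adj_counit (F c)) (fmap F (adj_unit c)) = idm (F c);
  adj_tri_r : forall d : Obj D,
      comp (fmap G (adj_counit d)) (adj_unit (G d)) = idm (G d) }.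

Record Cocone (J K : Category) (D : Functor J K) (c : Obj K) := {
  leg :> forall j : Obj J, Hom (D j) c;
  leg_comm : forall j j' (f : Hom j j'), comp (leg j') (fmap D f) = leg j }.

Definition IsColimit (J K : Category) (D : Functor J K) (c : Obj K)
  (cc : Cocone D c) : Prop :=
  forall (c' : Obj K) (cc' : Cocone D c'),
    exists! u : Hom c c', forall j, comp u (cc j) = cc' j.

(* K has colimits of all diagrams indexed by categories of size u *)
Definition Cocomplete@{u o h} (K : Category@{o h}) : Prop :=
  forall (J : Category@{u u}) (D : Functor J K),
    exists (c : Obj K) (cc : Cocone D c), IsColimit cc.

Definition FullyFaithful (A K : Category) (i : Functor A K) : Prop :=
  forall (a b : Obj A) (g : Hom (i a) (i b)), exists! f : Hom a b, fmap i f = g.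

Definition CommaCat (A K : Category) (i : Functor A K) (k : Obj K) : Category.
Proof.
  unshelve refine {| Obj := { a : Obj A & Hom (i a) k };
            Hom := fun x y => { g : Hom (projT1 x) (projT1 y) |
                                comp (projT2 y) (fmap i g) = projT2 x } |}.
  - intros [a f]; exists (idm a); simpl. rewrite fmap_id; apply comp_idr.
  - intros [a f] [b g] [c h] [v Hv] [u Hu]; exists (comp v u); simpl in *.
    rewrite fmap_comp, comp_assoc, Hv; exact Hu.
  - intros [a f] [b g] [u Hu]; simpl.
    apply eq_exist_uncurried; exists (comp_idl u); apply proof_irrelevance.
  - intros [a f] [b g] [u Hu]; simpl.
    apply eq_exist_uncurried; exists (comp_idr u); apply proof_irrelevance.
  - intros [a f] [b g] [c h] [d e] [u Hu] [v Hv] [w Hw]; simpl.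
    apply eq_exist_uncurried; exists (comp_assoc u v w); apply proof_irrelevance.
Defined.

Definition CommaDiag (A K : Category) (i : Functor A K) (k : Obj K) :
  Functor (CommaCat i k) K.
Proof.
  refine (@Build_Functor (CommaCat i k) K (fun x => i (projT1 x))
            (fun x y (g : @Hom (CommaCat i k) x y) => fmap i (proj1_sig g)) _ _).
  - intros [a f]; simpl; apply fmap_id.
  - intros [a f] [b g] [c h] [v Hv] [u Hu]; simpl; apply fmap_comp.
Defined.

Definition CommaCocone (A K : Category) (i : Functor A K) (k : Obj K) :
  Cocone (CommaDiag i k) k.
Proof.
  refine (@Build_Cocone (CommaCat i k) K (CommaDiag i k) k
            (fun x => projT2 x) _).
  intros [a f] [b g] [u Hu]; simpl; exact Hu.
Defined.

Definition Dense (A K : Category) (i : Functor A K) : Prop :=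
  forall k : Obj K, IsColimit (CommaCocone i k).

Definition IsLan (B C D : Category) (F : Functor B C) (p : Functor B D)
  (L : Functor D C) (eta : NatTrans F (FComp L p)) : Prop :=
  forall (G : Functor D C) (alpha : NatTrans F (FComp G p)),
    exists! sigma : NatTrans L G,
      forall b : Obj B, comp (sigma (p b)) (eta b) = alpha b.

Definition Nerve (A K : Category) (i : Functor A K) : Functor K (PSh A) :=
  homFrom i.

(* Isbell duality O -| Spec turns maps O (R k) -> Y into maps R k -> Spec Y, and the nerve R
   is fully faithful because i is dense.  It therefore suffices that the unit X -> R (L X),
   x |-> L x o eta, of L -| R is invertible at every Spec Y, naturally in Y.  Because K is
   cocomplete, L X is the colimit of i over the elements of X, so i induces maps
   L (y b) -> i b, natural in b.
   Post-composing g : i a -> L (Spec Y) with L of the evaluations Spec Y -> y b at the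
   elements of Y, and reflecting along the fully faithful i, gives an element of Spec Y a; this
   is a left inverse of the unit, and a right inverse by density of i once more. *)

From Stdlib Require Import FunctionalExtensionality ProofIrrelevance ClassicalEpsilon.

Set Universe Polymorphism.

Lemma exists_unique_eq {T : Type} {P : T -> Prop} {x y : T} :
  (exists! z, P z) -> P x -> P y -> x = y.
Proof.
  intros [z [_ Hz]] Hx Hy.
  transitivity z; [symmetry|]; apply Hz; assumption.
Qed.

Section Colimit.
Context {J C : Category} {D : Functor J C} {c : Obj C} {cc : Cocone D c}
  (H : IsColimit cc).

Definition colim_desc {c' : Obj C} (cc' : Cocone D c') : Hom c c' :=
  proj1_sig (constructive_definite_description _ (H c' cc')).

Lemma colim_desc_leg {c'} (cc' : Cocone D c') j :
  comp (colim_desc cc') (cc j) = cc' j.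
Proof. exact (proj2_sig (constructive_definite_description _ (H c' cc')) j). Qed.

Lemma colim_desc_unique {c'} (cc' : Cocone D c') (u : Hom c c') :
  (forall j, comp u (cc j) = cc' j) -> u = colim_desc cc'.
Proof. intros Hu; apply (exists_unique_eq (H c' cc')); [exact Hu | apply colim_desc_leg]. Qed.

Definition cocone_postcomp {c'} (v : Hom c c') : Cocone D c'.
Proof.
  refine {| leg := fun j => comp v (cc j) |}.
  intros j j' f; rewrite <- comp_assoc, leg_comm; reflexivity.
Defined.

Lemma colim_hom_ext {c'} (u v : Hom c c') :
  (forall j, comp u (cc j) = comp v (cc j)) -> u = v.
Proof.
  intros Huv; apply (exists_unique_eq (H c' (cocone_postcomp v))); [exact Huv | reflexivity].
Qed.
End Colimit.

Section FullyFaithful.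
Context {C D : Category} {F : Functor C D} (HF : FullyFaithful F).

Definition ff_inv {a b : C} (h : Hom (F a) (F b)) : Hom a b :=
  proj1_sig (constructive_definite_description _ (HF a b h)).

Lemma fmap_ff_inv {a b : C} (h : Hom (F a) (F b)) : fmap F (ff_inv h) = h.
Proof. exact (proj2_sig (constructive_definite_description _ (HF a b h))). Qed.

Lemma ff_inv_fmap {a b : C} (f : Hom a b) : ff_inv (fmap F f) = f.
Proof. apply (exists_unique_eq (HF a b (fmap F f))); [apply fmap_ff_inv | reflexivity]. Qed.

Lemma ff_inv_compl {a b c : C} (g : Hom b c) (h : Hom (F a) (F b)) :
  ff_inv (comp (fmap F g) h) = comp g (ff_inv h).
Proof. rewrite <- (fmap_ff_inv h) at 1; rewrite <- fmap_comp; apply ff_inv_fmap. Qed.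

Lemma ff_inv_compr {a b c : C} (h : Hom (F b) (F c)) (f : Hom a b) :
  ff_inv (comp h (fmap F f)) = comp (ff_inv h) f.
Proof. rewrite <- (fmap_ff_inv h) at 1; rewrite <- fmap_comp; apply ff_inv_fmap. Qed.
End FullyFaithful.

Section Lan.
Context {B C D : Category} {F : Functor B C} {p : Functor B D} {L : Functor D C}
  {eta : NatTrans F (FComp L p)} (HL : IsLan eta).

Definition lan_desc {G : Functor D C} (alpha : NatTrans F (FComp G p)) : NatTrans L G :=
  proj1_sig (constructive_definite_description _ (HL G alpha)).

Lemma lan_desc_eta {G : Functor D C} (alpha : NatTrans F (FComp G p)) (b : B) :
  comp (lan_desc alpha (p b)) (eta b) = alpha b.
Proof. exact (proj2_sig (constructive_definite_description _ (HL G alpha)) b). Qed.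

Lemma lan_nat_unique {G : Functor D C} (alpha : NatTrans F (FComp G p)) (s t : NatTrans L G) :
  (forall b, comp (s (p b)) (eta b) = alpha b) ->
  (forall b, comp (t (p b)) (eta b) = alpha b) -> s = t.
Proof. apply (exists_unique_eq (HL G alpha)). Qed.
End Lan.

Record HomAdjunction (C D : Category) (F : Functor C D) (G : Functor D C) := {
  transpose : forall c d, Hom (F c) d -> Hom c (G d);
  untranspose : forall c d, Hom c (G d) -> Hom (F c) d;
  untranspose_transpose : forall c d h, untranspose c d (transpose c d h) = h;
  transpose_untranspose : forall c d u, transpose c d (untranspose c d u) = u;
  untranspose_nat : forall c' c d d' (f : Hom c' c) (g : Hom d d') (u : Hom c (G d)),
    untranspose c' d' (comp (fmap G g) (comp u f)) =
    comp g (comp (untranspose c d u) (fmap F f)) }.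
Arguments HomAdjunction {C D} F G.
Arguments transpose {C D F G} _ {c d} _.
Arguments untranspose {C D F G} _ {c d} _.
Arguments untranspose_transpose {C D F G} _ {c d} _.
Arguments transpose_untranspose {C D F G} _ {c d} _.
Arguments untranspose_nat {C D F G} _ {c' c d d'} _ _ _.

Section HomAdjunctionTheory.
Context {C D : Category} {F : Functor C D} {G : Functor D C} (adj : HomAdjunction F G).

Lemma transpose_nat c' c d d' (f : Hom c' c) (g : Hom d d') (h : Hom (F c) d) :
  transpose adj (comp g (comp h (fmap F f))) = comp (fmap G g) (comp (transpose adj h) f).
Proof.
  rewrite <- (transpose_untranspose adj (comp (fmap G g) (comp (transpose adj h) f))).
  rewrite untranspose_nat, untranspose_transpose; reflexivity.
Qed.

Definition adjunction_of_hom_adjunction : Adjunction F G.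
Proof.
  unshelve refine {|
    adj_unit := @Build_NatTrans C C (IdF C) (FComp G F)
                  (fun c => transpose adj (idm (F c))) _;
    adj_counit := @Build_NatTrans D D (FComp F G) (IdF D)
                    (fun d => untranspose adj (idm (G d))) _ |}.
  - intros a b f; simpl.
    transitivity (transpose adj (fmap F f)).
    + rewrite <- (comp_idl (comp (transpose adj (idm (F b))) f)).
      rewrite <- (fmap_id G), <- transpose_nat, !comp_idl; reflexivity.
    + rewrite <- (comp_idr (transpose adj (idm (F a)))).
      rewrite <- transpose_nat, comp_idl, fmap_id, comp_idr; reflexivity.
  - intros a b g; simpl.
    transitivity (untranspose adj (fmap G g)).
    + rewrite <- (comp_idl (comp (untranspose adj (idm (G b))) (fmap F (fmap G g)))).
      rewrite <- untranspose_nat, fmap_id, !comp_idl; reflexivity.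
    + rewrite <- (comp_idr (untranspose adj (idm (G a)))), <- (fmap_id F).
      rewrite <- untranspose_nat, !comp_idr; reflexivity.
  - intros c; simpl.
    rewrite <- (comp_idl (comp (untranspose adj (idm (G (F c))))
                               (fmap F (transpose adj (idm (F c)))))).
    rewrite <- untranspose_nat, fmap_id, !comp_idl, untranspose_transpose; reflexivity.
  - intros d; simpl.
    rewrite <- (comp_idr (transpose adj (idm (F (G d))))).
    rewrite <- transpose_nat, comp_idl, fmap_id, comp_idr, transpose_untranspose; reflexivity.
Defined.
End HomAdjunctionTheory.

Section RestrictHomAdjunction.
Context {C D K : Category} {F : Functor C D} {G : Functor D C} (adj : HomAdjunction F G)
  {R : Functor K C} (HR : FullyFaithful R) {G' : Functor D K}
  {unit : forall d, Hom (G d) (R (G' d))}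
  (unit_nat : forall d d' (g : Hom d d'),
     comp (unit d') (fmap G g) = comp (fmap R (fmap G' g)) (unit d))
  {retract : forall d, Hom (R (G' d)) (G d)}
  (retract_unit : forall d, comp (retract d) (unit d) = idm (G d))
  (unit_retract : forall d, comp (unit d) (retract d) = idm (R (G' d))).

Lemma retract_nat d d' (g : Hom d d') :
  comp (retract d') (fmap R (fmap G' g)) = comp (fmap G g) (retract d).
Proof.
  rewrite <- (comp_idr (comp (retract d') (fmap R (fmap G' g)))), <- unit_retract.
  rewrite <- comp_assoc, (comp_assoc (retract d) (unit d)), <- unit_nat.
  rewrite !comp_assoc, retract_unit, comp_idl; reflexivity.
Qed.

Definition restrict_hom_adjunction : HomAdjunction (FComp F R) G'.
Proof.
  refine (@Build_HomAdjunction K D (FComp F R) G'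
    (fun k d h => ff_inv HR (comp (unit d) (transpose adj h)))
    (fun k d u => untranspose adj (comp (retract d) (fmap R u))) _ _ _).
  - intros k d h; cbv beta.
    rewrite (fmap_ff_inv HR), comp_assoc, retract_unit, comp_idl.
    exact (untranspose_transpose adj (c := R k) h).
  - intros k d u; cbv beta.
    rewrite transpose_untranspose, comp_assoc, unit_retract, comp_idl.
    apply (ff_inv_fmap HR).
  - intros k' k d d' f g u; cbn [fmap FComp].
    rewrite !fmap_comp, comp_assoc, retract_nat, <- comp_assoc, (comp_assoc (fmap R f)).
    exact (untranspose_nat adj (c' := R k') (c := R k) (fmap R f) g (comp (retract d) (fmap R u))).
Defined.
End RestrictHomAdjunction.

Section Presheaves.
Context {A : Category}.

Definition yoneda {X : Obj (PSh A)} {a : A} (x : X a) : @Hom (PSh A) (yo A a) X.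
Proof.
  refine (@Build_NatTrans (op A) SetCat (yo A a) X (fun c (h : @Hom A c a) => fmap X h x) _).
  intros c d f; apply functional_extensionality; intros h.
  exact (equal_f (fmap_comp X _ _) x).
Defined.

Lemma yoneda_fmap_yo {X : Obj (PSh A)} {a b : A} (x : X b) (g : @Hom A a b) :
  @comp (PSh A) _ _ _ (yoneda x) (fmap (yo A) g) = yoneda (fmap X g x).
Proof.
  apply nat_eq; intros c; apply functional_extensionality; intros h.
  exact (equal_f (fmap_comp X _ _) x).
Qed.

Lemma yoneda_idm (a : A) : @yoneda (yo A a) a (idm a) = idm (yo A a).
Proof.
  apply nat_eq; intros c; apply functional_extensionality; intros h.
  apply comp_idl.
Qed.

Lemma comp_yoneda {X X' : Obj (PSh A)} (f : @Hom (PSh A) X X') {a : A} (x : X a) :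
  @comp (PSh A) _ _ _ f (yoneda x) = yoneda (f a x).
Proof.
  apply nat_eq; intros c; apply functional_extensionality; intros h.
  exact (equal_f (naturality f h) x).
Qed.

Definition Elements (X : Obj (PSh A)) : Category.
Proof.
  unshelve refine {| Obj := {a : A & X a};
    Hom := fun p q => {g : @Hom A (projT1 p) (projT1 q) | fmap X g (projT2 q) = projT2 p} |}.
  - intros [a x]; exists (idm a). exact (equal_f (fmap_id X a) x).
  - intros [a x] [b y] [c z] [g Hg] [f Hf]; exists (comp g f); simpl in *.
    rewrite <- Hf, <- Hg. exact (equal_f (fmap_comp X _ _) z).
  - intros [a x] [b y] [u Hu].
    apply eq_exist_uncurried; exists (comp_idl u); apply proof_irrelevance.
  - intros [a x] [b y] [u Hu].
    apply eq_exist_uncurried; exists (comp_idr u); apply proof_irrelevance.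
  - intros [a x] [b y] [c z] [d e] [f Hf] [g Hg] [h Hh].
    apply eq_exist_uncurried; exists (comp_assoc f g h); apply proof_irrelevance.
Defined.

Definition elements_proj (X : Obj (PSh A)) : Functor (Elements X) A.
Proof.
  refine (@Build_Functor (Elements X) A (fun p => projT1 p)
            (fun p q (g : @Hom (Elements X) p q) => proj1_sig g) _ _).
  - intros [a x]; reflexivity.
  - intros [a x] [b y] [c z] [g Hg] [f Hf]; reflexivity.
Defined.
End Presheaves.

Section Isbell.
Context (A : Category).

Definition isbell_transpose_at {X : Obj (PSh A)} {Y : Obj (CoPSh A)}
  (t : NatTrans Y (IsbellO_obj X)) (a : A) (x : X a) : IsbellSpec_obj Y a.
Proof.
  refine (@Build_NatTrans A SetCat Y (coyo A a) (fun b y => t b y a x) _).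
  intros b b' h; apply functional_extensionality; intros y.
  exact (equal_f (f_equal (fun s : @Hom (PSh A) X (yo A b') => s a)
                          (equal_f (naturality t h) y)) x).
Defined.

Definition isbell_transpose {X : Obj (PSh A)} {Y : Obj (CoPSh A)}
  (t : NatTrans Y (IsbellO_obj X)) : NatTrans X (IsbellSpec_obj Y).
Proof.
  refine (@Build_NatTrans (op A) SetCat X (IsbellSpec_obj Y) (isbell_transpose_at t) _).
  intros a a' u; apply functional_extensionality; intros x.
  apply nat_eq; intros b; apply functional_extensionality; intros y.
  exact (equal_f (naturality (t b y) u) x).
Defined.

Definition isbell_untranspose_at {X : Obj (PSh A)} {Y : Obj (CoPSh A)}
  (s : NatTrans X (IsbellSpec_obj Y)) (b : A) (y : Y b) : IsbellO_obj X b.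
Proof.
  refine (@Build_NatTrans (op A) SetCat X (yo A b) (fun a x => s a x b y) _).
  intros a a' u; apply functional_extensionality; intros x.
  exact (equal_f (f_equal (fun r : @Hom (CoPSh A) Y (coyo A a') => r b)
                          (equal_f (naturality s u) x)) y).
Defined.

Definition isbell_untranspose {X : Obj (PSh A)} {Y : Obj (CoPSh A)}
  (s : NatTrans X (IsbellSpec_obj Y)) : NatTrans Y (IsbellO_obj X).
Proof.
  refine (@Build_NatTrans A SetCat Y (IsbellO_obj X) (isbell_untranspose_at s) _).
  intros b b' h; apply functional_extensionality; intros y.
  apply nat_eq; intros a; apply functional_extensionality; intros x.
  exact (equal_f (naturality (s a x) h) y).
Defined.

Definition isbell_hom_adjunction : HomAdjunction (IsbellO A) (IsbellSpec A).
Proof.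
  refine (@Build_HomAdjunction (PSh A) (op (CoPSh A)) (IsbellO A) (IsbellSpec A)
    (fun X Y t => isbell_transpose t) (fun X Y s => isbell_untranspose s) _ _ _);
  intros; apply nat_eq; intros b; apply functional_extensionality; intros y;
  apply nat_eq; intros a; apply functional_extensionality; intros x; reflexivity.
Defined.
End Isbell.

Lemma dense_nerve_fully_faithful {A K : Category} {i : Functor A K} :
  Dense i -> FullyFaithful (Nerve i).
Proof.
  intros Hdense k k' t.
  unshelve epose (cc := @Build_Cocone _ _ (CommaDiag i k) k'
                          (fun p => t (projT1 p) (projT2 p)) _).
  { intros [a g] [a' g'] [v Hv]; simpl in *; subst g.
    exact (eq_sym (equal_f (naturality t v) g')). }
  exists (colim_desc (Hdense k) cc); split.
  - apply nat_eq; intros a; apply functional_extensionality; intros g.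
    exact (colim_desc_leg (Hdense k) cc (existT _ a g)).
  - intros u Hu; symmetry; apply colim_desc_unique; intros [a g]; subst t; reflexivity.
Qed.

Section LanUnit.
Context {A K : Category} (i : Functor A K) (L : Functor (PSh A) K)
  (eta : NatTrans i (FComp L (yo A))).

Definition elements_diag (X : Obj (PSh A)) : Functor (Elements X) K :=
  FComp i (elements_proj X).

Definition nerve_cocone {X : Obj (PSh A)} {k : K} (t : @Hom (PSh A) X (Nerve i k)) :
  Cocone (elements_diag X) k.
Proof.
  refine (@Build_Cocone _ K (elements_diag X) k (fun p => t (projT1 p) (projT2 p)) _).
  intros [a x] [b z] [g Hg]; cbn in *; subst x.
  exact (eq_sym (equal_f (naturality t g) z)).
Defined.

Lemma lan_unit_component_nat (X : Obj (PSh A)) (a b : A) (z : X b) (g : @Hom A a b) :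
  comp (comp (fmap L (yoneda z)) (eta b)) (fmap i g) =
  comp (fmap L (yoneda (fmap X g z))) (eta a).
Proof.
  pose proof (naturality eta g) as E.
  change (@comp K (i a) (i b) (L (yo A b)) (eta b) (fmap i g) =
          @comp K (i a) (L (yo A a)) (L (yo A b)) (fmap L (fmap (yo A) g)) (eta a)) in E.
  rewrite <- comp_assoc, E, comp_assoc, <- fmap_comp, yoneda_fmap_yo; reflexivity.
Qed.

Definition lan_unit (X : Obj (PSh A)) : @Hom (PSh A) X (Nerve i (L X)).
Proof.
  refine (@Build_NatTrans (op A) SetCat X (Nerve i (L X))
            (fun a (x : X a) => comp (fmap L (yoneda x)) (eta a)) _).
  intros b a g; apply functional_extensionality; intros z.
  exact (eq_sym (lan_unit_component_nat X a b z g)).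
Defined.

Definition lan_cocone (X : Obj (PSh A)) : Cocone (elements_diag X) (L X) :=
  nerve_cocone (lan_unit X).

Lemma lan_unit_fmap {X Y : Obj (PSh A)} (f : @Hom (PSh A) X Y) (a : A) (x : X a) :
  comp (fmap L f) (lan_unit X a x) = lan_unit Y a (f a x).
Proof.
  change (comp (fmap L f) (comp (fmap L (yoneda x)) (eta a)) =
          comp (fmap L (yoneda (f a x))) (eta a)).
  rewrite <- (comp_yoneda f x), fmap_comp, comp_assoc; reflexivity.
Qed.

Lemma lan_unit_nat {X Y : Obj (PSh A)} (f : @Hom (PSh A) X Y) :
  @comp (PSh A) _ _ _ (lan_unit Y) f =
  @comp (PSh A) _ _ _ (fmap (Nerve i) (fmap L f)) (lan_unit X).
Proof.
  apply nat_eq; intros a; apply functional_extensionality; intros x.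
  exact (eq_sym (lan_unit_fmap f a x)).
Qed.

Lemma lan_unit_yo_idm (a : A) : lan_unit (yo A a) a (idm a) = eta a.
Proof.
  change (comp (fmap L (@yoneda A (yo A a) a (idm a))) (eta a) = eta a).
  rewrite yoneda_idm, fmap_id; apply comp_idl.
Qed.
End LanUnit.

(* L is a retract of the pointwise extension X |-> colim (El X -> A -> K) built from chosen
   colimits, by uniqueness in the Kan extension property; that suffices for L X to be the
   colimit as well. *)
Section PointwiseLan.
Context {A K : Category} {i : Functor A K} (Hcocomplete : Cocomplete K)
  {L : Functor (PSh A) K} {eta : NatTrans i (FComp L (yo A))} (HL : IsLan eta).

Definition pointwise_colimit_data (X : Obj (PSh A)) :
  {c : K & {cc : Cocone (elements_diag i X) c | IsColimit cc}}.
Proof.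
  destruct (constructive_indefinite_description _ (Hcocomplete _ (elements_diag i X)))
    as [c Hc].
  exists c; exact (constructive_indefinite_description _ Hc).
Defined.

Definition pointwise_obj X : K := projT1 (pointwise_colimit_data X).
Definition pointwise_leg X : Cocone (elements_diag i X) (pointwise_obj X) :=
  proj1_sig (projT2 (pointwise_colimit_data X)).
Definition pointwise_colimit X : IsColimit (pointwise_leg X) :=
  proj2_sig (projT2 (pointwise_colimit_data X)).

Definition pointwise_fmap_cocone {X X' : Obj (PSh A)} (f : @Hom (PSh A) X X') :
  Cocone (elements_diag i X) (pointwise_obj X').
Proof.
  refine (@Build_Cocone _ K (elements_diag i X) (pointwise_obj X')
     (fun p => pointwise_leg X' (existT _ (projT1 p) (f _ (projT2 p)))) _).
  intros [a x] [b z] [g Hg].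
  unshelve refine (leg_comm (pointwise_leg X') (j := existT _ a (f a x)) (j' := existT _ b (f b z))
                     (exist _ g _)).
  exact (eq_trans (eq_sym (equal_f (naturality f g) z)) (f_equal (f a) Hg)).
Defined.

Definition pointwise_fmap {X X'} (f : @Hom (PSh A) X X') :
  Hom (pointwise_obj X) (pointwise_obj X') :=
  colim_desc (pointwise_colimit X) (pointwise_fmap_cocone f).

Lemma pointwise_fmap_leg {X X'} (f : @Hom (PSh A) X X') (a : A) (x : X a) :
  comp (pointwise_fmap f) (pointwise_leg X (existT _ a x)) = pointwise_leg X' (existT _ a (f a x)).
Proof. exact (colim_desc_leg (pointwise_colimit X) (pointwise_fmap_cocone f) (existT _ a x)). Qed.

Definition pointwise_lan : Functor (PSh A) K.
Proof.
  refine (@Build_Functor (PSh A) K pointwise_obj (fun X X' f => pointwise_fmap f) _ _).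
  - intros X; symmetry; apply (colim_hom_ext (pointwise_colimit X)); intros [a x].
    rewrite pointwise_fmap_leg, comp_idl; reflexivity.
  - intros X Y Z g f; apply (colim_hom_ext (pointwise_colimit X)); intros [a x].
    rewrite <- comp_assoc, !pointwise_fmap_leg; exact (eq_sym (pointwise_fmap_leg g a (f a x))).
Defined.

Definition pointwise_eta : NatTrans i (FComp pointwise_lan (yo A)).
Proof.
  refine (@Build_NatTrans A K i (FComp pointwise_lan (yo A))
            (fun a => pointwise_leg (yo A a) (existT (yo A a) a (idm a))) _).
  intros a b f; cbn [fmap FComp pointwise_lan].
  transitivity (pointwise_leg (yo A b) (existT (yo A b) a f)).
  - exact (leg_comm (pointwise_leg (yo A b)) (j := existT (yo A b) a f)
             (j' := existT (yo A b) b (idm b)) (exist _ f (comp_idl f))).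
  - symmetry; etransitivity; [apply pointwise_fmap_leg|]; cbn; rewrite comp_idr; reflexivity.
Defined.

Definition lan_to_pointwise : NatTrans L pointwise_lan := lan_desc HL pointwise_eta.

Definition pointwise_to_lan : NatTrans pointwise_lan L.
Proof.
  refine (@Build_NatTrans (PSh A) K pointwise_lan L
            (fun X => colim_desc (pointwise_colimit X) (lan_cocone i L eta X)) _).
  intros X X' f; apply (colim_hom_ext (pointwise_colimit X)); intros [a x].
  cbn [fmap pointwise_lan].
  rewrite <- !comp_assoc, pointwise_fmap_leg, colim_desc_leg.
  exact (eq_trans (colim_desc_leg (pointwise_colimit X') (lan_cocone i L eta X')
                     (existT (fun c => X' c) a (f a x)))
                  (eq_sym (lan_unit_fmap i L eta f a x))).
Defined.

Lemma pointwise_to_lan_leg (X : Obj (PSh A)) (a : A) (x : X a) :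
  comp (pointwise_to_lan X) (pointwise_leg X (existT _ a x)) = lan_unit i L eta X a x.
Proof. exact (colim_desc_leg (pointwise_colimit X) (lan_cocone i L eta X) (existT _ a x)). Qed.

Lemma pointwise_to_lan_lan_to_pointwise (X : Obj (PSh A)) :
  comp (pointwise_to_lan X) (lan_to_pointwise X) = idm (L X).
Proof.
  assert (E : NatComp pointwise_to_lan lan_to_pointwise = NatId L).
  { apply (lan_nat_unique HL eta); intros b; cbn [component NatComp NatId].
    - rewrite <- comp_assoc; unfold lan_to_pointwise; rewrite lan_desc_eta.
      cbn [component pointwise_eta].
      etransitivity; [apply pointwise_to_lan_leg | apply lan_unit_yo_idm].
    - apply comp_idl. }
  exact (f_equal (fun t => component t X) E).
Qed.

Lemma lan_to_pointwise_lan_unit (X : Obj (PSh A)) (a : A) (x : X a) :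
  comp (lan_to_pointwise X) (lan_unit i L eta X a x) = pointwise_leg X (existT _ a x).
Proof.
  change (comp (lan_to_pointwise X) (comp (fmap L (yoneda x)) (eta a)) =
          pointwise_leg X (existT _ a x)).
  transitivity (comp (pointwise_fmap (yoneda x)) (comp (lan_to_pointwise (yo A a)) (eta a))).
  { rewrite !comp_assoc.
    exact (f_equal (fun h => comp h (eta a)) (naturality lan_to_pointwise (yoneda x))). }
  transitivity (comp (pointwise_fmap (yoneda x)) (pointwise_eta a)).
  { exact (f_equal (comp (pointwise_fmap (yoneda x))) (lan_desc_eta HL pointwise_eta a)). }
  etransitivity; [apply pointwise_fmap_leg|]; cbn.
  exact (f_equal (fun y => pointwise_leg X (existT _ a y) : Hom (i a) (pointwise_obj X))
                 (equal_f (fmap_id X a) x)).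
Qed.

Theorem lan_cocone_colimit (X : Obj (PSh A)) : IsColimit (lan_cocone i L eta X).
Proof.
  intros c' cc'; exists (comp (colim_desc (pointwise_colimit X) cc') (lan_to_pointwise X)); split.
  - intros [a x]; rewrite <- comp_assoc.
    exact (eq_trans (f_equal (comp (colim_desc (pointwise_colimit X) cc'))
                             (lan_to_pointwise_lan_unit X a x))
                    (colim_desc_leg (pointwise_colimit X) cc' (existT _ a x))).
  - intros u Hu.
    rewrite <- (comp_idr u), <- pointwise_to_lan_lan_to_pointwise, comp_assoc; f_equal.
    symmetry; apply colim_desc_unique; intros [a x].
    rewrite <- comp_assoc, pointwise_to_lan_leg; apply Hu.
Qed.
End PointwiseLan.

Section SpecUnit.
Context {A K : Category} {i : Functor A K} (Hfull : FullyFaithful i) (Hdense : Dense i)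
  {L : Functor (PSh A) K} {eta : NatTrans i (FComp L (yo A))}
  (Hcolim : forall X, IsColimit (lan_cocone i L eta X)).

Local Notation unit := (lan_unit i L eta).
Local Notation Spec := (IsbellSpec A).

Definition lan_yo_counit (b : A) : Hom (L (yo A b)) (i b) :=
  colim_desc (Hcolim (yo A b)) (nerve_cocone i (@yoneda A (Nerve i (i b)) b (idm (i b)))).

Lemma lan_yo_counit_unit (a b : A) (f : @Hom A a b) :
  comp (lan_yo_counit b) (unit (yo A b) a f) = fmap i f.
Proof.
  etransitivity; [exact (colim_desc_leg (Hcolim (yo A b)) _ (existT _ a f)) | apply comp_idl].
Qed.

Lemma lan_yo_counit_nat (b b' : A) (h : @Hom A b b') :
  comp (lan_yo_counit b') (fmap L (fmap (yo A) h)) = comp (fmap i h) (lan_yo_counit b).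
Proof.
  apply (colim_hom_ext (Hcolim (yo A b))); intros [a f].
  change (comp (comp (lan_yo_counit b') (fmap L (fmap (yo A) h))) (unit (yo A b) a f) =
          comp (comp (fmap i h) (lan_yo_counit b)) (unit (yo A b) a f)).
  rewrite <- !comp_assoc, lan_unit_fmap, !lan_yo_counit_unit, <- fmap_comp; reflexivity.
Qed.

Definition spec_eval (Y : Obj (CoPSh A)) (b : A) (y : Y b) : @Hom (PSh A) (Spec Y) (yo A b).
Proof.
  refine (@Build_NatTrans (op A) SetCat (Spec Y) (yo A b)
     (fun a (s : @Hom (CoPSh A) Y (coyo A a)) => s b y) _).
  intros a a' f; apply functional_extensionality; intros s; reflexivity.
Defined.

Lemma spec_eval_fmap (Y : Obj (CoPSh A)) (b b' : A) (h : @Hom A b b') (y : Y b) :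
  spec_eval Y b' (fmap Y h y) = @comp (PSh A) _ _ _ (fmap (yo A) h) (spec_eval Y b y).
Proof.
  apply nat_eq; intros a; apply functional_extensionality; intros s.
  exact (equal_f (naturality s h) y).
Qed.

Definition spec_retract_at (Y : Obj (CoPSh A)) (a : A) (g : Hom (i a) (L (Spec Y))) :
  Spec Y a.
Proof.
  refine (@Build_NatTrans A SetCat Y (coyo A a)
    (fun b y => ff_inv Hfull (comp (lan_yo_counit b) (comp (fmap L (spec_eval Y b y)) g))) _).
  intros b b' h; apply functional_extensionality; intros y; cbn.
  rewrite spec_eval_fmap, fmap_comp, !comp_assoc, lan_yo_counit_nat, <- !comp_assoc.
  apply ff_inv_compl.
Defined.

Definition spec_retract (Y : Obj (CoPSh A)) : @Hom (PSh A) (Nerve i (L (Spec Y))) (Spec Y).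
Proof.
  refine (@Build_NatTrans (op A) SetCat (Nerve i (L (Spec Y))) (Spec Y)
            (spec_retract_at Y) _).
  intros a a' f; apply functional_extensionality; intros g.
  apply nat_eq; intros b; apply functional_extensionality; intros y; cbn.
  rewrite !comp_assoc; apply ff_inv_compr.
Defined.

Lemma spec_retract_unit (Y : Obj (CoPSh A)) :
  @comp (PSh A) _ _ _ (spec_retract Y) (unit (Spec Y)) = idm (Spec Y).
Proof.
  apply nat_eq; intros a; apply functional_extensionality; intros s.
  apply nat_eq; intros b; apply functional_extensionality; intros y.
  change (ff_inv Hfull (comp (lan_yo_counit b)
            (comp (fmap L (spec_eval Y b y)) (unit (Spec Y) a s))) = s b y).
  rewrite lan_unit_fmap, lan_yo_counit_unit; apply ff_inv_fmap.
Qed.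

Lemma lan_unit_spec_retract (Y : Obj (CoPSh A)) :
  @comp (PSh A) _ _ _ (unit (Spec Y)) (spec_retract Y) = idm (Nerve i (L (Spec Y))).
Proof.
  pose (HR := dense_nerve_fully_faithful Hdense).
  set (t := @comp (PSh A) _ _ _ (unit (Spec Y)) (spec_retract Y)).
  assert (Hu : ff_inv HR t = idm (L (Spec Y))).
  { apply (colim_hom_ext (Hcolim (Spec Y))); intros [a s].
    change (comp (ff_inv HR t) (unit (Spec Y) a s) = comp (idm _) (unit (Spec Y) a s)).
    rewrite comp_idl.
    change (fmap (Nerve i) (ff_inv HR t) a (unit (Spec Y) a s) = unit (Spec Y) a s).
    rewrite (fmap_ff_inv HR).
    exact (f_equal (fun r : @Hom (PSh A) (Spec Y) (Spec Y) => unit (Spec Y) a (r a s))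
             (spec_retract_unit Y)). }
  rewrite <- (fmap_ff_inv HR t), Hu; apply fmap_id.
Qed.
End SpecUnit.

#[universes(polymorphic)]
Theorem proposition2p5@{u v +}
  (A : Category@{u u}) (K : Category@{v u})
  (i : Functor A K)
  (Hcocomplete : Cocomplete@{u v u} K)
  (Hfull : FullyFaithful i)
  (Hdense : Dense i)
  (L : Functor (PSh A) K) (eta : NatTrans i (FComp L (yo A)))
  (HL : @IsLan A K (PSh A) i (yo A) L eta) :
  inhabited (Adjunction (FComp (IsbellO A) (Nerve i))
                        (FComp L (IsbellSpec A))).
Proof.
  pose proof (lan_cocone_colimit Hcocomplete HL) as Hcolim.
  constructor; apply adjunction_of_hom_adjunction.
  refine (restrict_hom_adjunction (isbell_hom_adjunction A) (dense_nerve_fully_faithful Hdense)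
            (G' := FComp L (IsbellSpec A)) (unit := fun Y => lan_unit i L eta (IsbellSpec A Y))
            _ (retract := spec_retract Hfull Hcolim) _ _).
  - intros Y Y' g; apply lan_unit_nat.
  - exact (spec_retract_unit Hfull Hcolim).
  - exact (lan_unit_spec_retract Hfull Hdense Hcolim).
Qed.
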